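(* Let $k\ge 1$ and $n\ge 2k$. Then \[ l_k(n)=\binom{n-1}{\lceil k/2\rceil-1}+\binom{n-1}{\lfloor k/2\rfloor-1}. \] Equivalently, for $k\ge1$: $l_{2k}(n)=2\binom{n-1}{k-1}$ whenever $n\ge 4k$, and $l_{2k+1}(n)=\binom{n}{k}$ whenever $n\ge 4k+2$. In particular, for $n\ge 2k$, $l_k(n)$ is a polynomial in $n$ of degree $\lceil (k-2)/2\rceil$.
   Context: For a positive integer $m$, $P_m$ denotes the path with vertex set $[m]=\{1,\dots,m\}$ in which $i$ and $j$ are adjacent iff $|i-j|=1$. An endomorphism of $P_n$ is a map $f:[n]\to[n]$ with $|f(i)-f(i+1)|=1$ for all $1\le i\le n-1$. Every endomorphism $f$ induces a partition of $[n]$ whose blocks are the nonempty fibers $f^{-1}(y)$. Let $\mathscr C(P_n)$ be the set of partitions of $[n]$ induced by endomorphisms of $P_n$, and for $1\le k\le n-1$ let $l_k(n)=|\{\rho\in\mathscr C(P_n): \rho \text{ has exactly } n-k+1 \text{ blocks}\}|$. Convention: $\binom{a}{b}=0$ if $b<0$ or $b>a$. *)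

From mathcomp Require Import all_boot all_order all_algebra.
Set Implicit Arguments. Unset Strict Implicit. Unset Printing Implicit Defensive.

(* The path P_n is modelled on vertex set 'I_n = {0,...,n-1}
   (vertex i+1 of the paper is the ordinal i); i ~ j iff |i - j| = 1. *)
Definition path_adj (n : nat) (i j : 'I_n) : bool :=
  (val i == (val j).+1) || (val j == (val i).+1).

Definition is_path_endo (n : nat) (f : {ffun 'I_n -> 'I_n}) : bool :=
  [forall i : 'I_n, forall j : 'I_n,
     (val j == (val i).+1) ==> path_adj (f i) (f j)].

Definition induced_partition (n : nat) (f : {ffun 'I_n -> 'I_n})
  : {set {set 'I_n}} := preim_partition f [set: 'I_n].

Definition CP (n : nat) : {set {set {set 'I_n}}} :=
  [set induced_partition f | f in [pred f | is_path_endo f]].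

Definition l_k (k n : nat) : nat :=
  #|[set rho in CP n | #|rho| == n - k + 1]|.

Definition binomz (a : nat) (b : int) : nat :=
  match b with Posz m => 'C(a, m) | Negz _ => 0 end.

From mathcomp Require Import all_boot all_order all_algebra.
From mathcomp Require Import zify.
Set Implicit Arguments. Unset Strict Implicit. Unset Printing Implicit Defensive.

(* Put L = n - 1 and S = n - k.  An endomorphism f of P_{L+1} is determined, up to
   translation, by its step word in {up, down}^L, and the fibres of f are the level
   sets of the walk of that word; conversely every word gives an endomorphism
   (walk_map).  Two words yield the same partition iff they are equal or mirror
   images (same_levels_mirror), and the number of blocks is the span
   max - min + 1 of the walk.  When L < 2S a walk cannot both rise by S and fall
   by S (rises_falls_excl), so partitions with S + 1 blocks are in bijection with
   the words whose maximal rise is exactly S (count_partitions).  Following the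
   excess of the walk over its running minimum (reach), the reflection principle
   counts these words as a difference of binomial tail sums (count_max_rise),
   which telescopes to two binomial coefficients (above2_diff). *)

(* all_words L lists every boolean word of length L exactly once; it turns counts
   over L.-tuple bool into counts over a list with an explicit recursion. *)
Fixpoint all_words (L : nat) : seq (seq bool) :=
  if L is L'.+1 then
    [seq true :: s | s <- all_words L'] ++ [seq false :: s | s <- all_words L']
  else [:: [::]].

Lemma size_all_words L : size (all_words L) = 2 ^ L.
Proof. by elim: L => //= L IH; rewrite size_cat !size_map IH expnS mul2n addnn. Qed.

Lemma mem_cons_map (T : eqType) (a b : T) s (l : seq (seq T)) :
  (a :: s \in [seq b :: x | x <- l]) = (a == b) && (s \in l).
Proof. by apply/mapP/andP => [[x xl [-> ->]] | [/eqP -> sl]]; last exists s. Qed.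

Lemma mem_all_words L s : (s \in all_words L) = (size s == L).
Proof.
elim: L s => [|L IH] [|b s] //=; rewrite mem_cat.
  by apply/orP => -[] /mapP [].
by rewrite !mem_cons_map IH; case: b; rewrite ?orbF.
Qed.

Lemma uniq_all_words L : uniq (all_words L).
Proof.
elim: L => //= L IH; rewrite cat_uniq !map_inj_uniq ?IH ?andbT //=; try by move=> x y [].
by apply/hasPn => _ /mapP [y _ ->]; rewrite mem_cons_map.
Qed.

Lemma card_tuple_count L (P : pred (seq bool)) :
  #|[set t : L.-tuple bool | P t]| = count P (all_words L).
Proof.
rewrite cardsE cardE /enum_mem size_filter -enumT.
have perm_words : perm_eq (map val (enum {: L.-tuple bool})) (all_words L).
  apply: uniq_perm; first by rewrite map_inj_uniq ?enum_uniq //; apply: val_inj.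
    exact: uniq_all_words.
  move=> s; rewrite mem_all_words; apply/mapP/idP => [[t _ ->] | /eqP sL].
    by rewrite size_tuple.
  by exists (Tuple (introT eqP sL)); rewrite ?mem_enum.
rewrite -(permP perm_words P) count_map enumT; by elim: (Finite.enum _) => //= t l ->.
Qed.

Lemma count_predD (T : Type) (a b : pred T) (l : seq T) : subpred b a ->
  count (fun x => a x && ~~ b x) l = count a l - count b l.
Proof.
move=> ba; elim: l => //= x l IH; rewrite IH; have := sub_count ba l.
by case: (b x) (ba x) => [/(_ isT) -> | _] /=; case: (a x) => /=; lia.
Qed.

Section Walks.
Implicit Types (s t : seq bool) (i j S : nat).

(* A word s is read as a walk with up-steps (true) and down-steps (false).  Its
   height after i steps is shifted by size s, so that it is a natural number and
   no subtraction below is truncated. *)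
Definition ups s i := count id (take i s).
Definition downs s i := count negb (take i s).
Definition height s i := size s + ups s i - downs s i.

(* There are no more down-steps than letters, so height never truncates. *)
Lemma downs_le s i : downs s i <= size s.
Proof. by rewrite /downs (leq_trans (count_size _ _)) // size_take_min geq_minr. Qed.

Lemma height0 s : height s 0 = size s.
Proof. by rewrite /height /ups /downs take0 addn0 subn0. Qed.

Lemma height_cons b s i : height (b :: s) i.+1 = height s i + 2 * b.
Proof.
rewrite /height /ups /downs /=; have := downs_le s i; rewrite /downs.
by case: b => /=; lia.
Qed.

Lemma height_step s i : i < size s ->
  if nth false s i then height s i.+1 = (height s i).+1
  else height s i = (height s i.+1).+1.
Proof.
move=> iS; have := downs_le s i; have := downs_le s i.+1.
rewrite /height /ups /downs (take_nth false iS) -cats1 !count_cat /=.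
by case: (nth false s i) => /=; lia.
Qed.

Lemma height_lipschitz s i j : i <= j ->
  height s j <= height s i + (j - i) /\ height s i <= height s j + (j - i).
Proof.
move=> ij; have := downs_le s i; have := downs_le s j.
rewrite /height /ups /downs -(subnKC ij) takeD !count_cat.
set t := take (j - i) _; have := count_predC id t.
have -> : count (predC id) t = count negb t by apply: eq_count.
have : size t <= j - i by rewrite size_take_min geq_minl.
lia.
Qed.

Lemma height_dist s i j : height s i <= height s j + (i - j) + (j - i).
Proof.
case: (leqP i j) => [ij | /ltnW ji].
  by have [_] := height_lipschitz s ij; lia.
by have [] := height_lipschitz s ji; lia.
Qed.

Lemma height_mirror s i : height (map negb s) i + height s i = 2 * size s.
Proof.
have := downs_le s i; have : ups s i <= size s.
  by rewrite /ups (leq_trans (count_size _ _)) // size_take_min geq_minr.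
rewrite /height /ups /downs size_map -map_take !count_map.
have -> : count (preim negb id) (take i s) = count negb (take i s) by apply: eq_count.
have -> : count (preim negb negb) (take i s) = count id (take i s).
  by apply: eq_count => b; rewrite /= negbK.
lia.
Qed.

Lemma height_ivt s x k v : x + k <= size s ->
  minn (height s x) (height s (x + k)) <= v <= maxn (height s x) (height s (x + k)) ->
  exists2 t, t <= size s & height s t = v.
Proof.
elim: k => [|k IH] xkS; first by rewrite addn0 minnn maxnn => /andP [lo hi]; exists x; lia.
move=> between; have := height_step (_ : x + k < size s); rewrite -addnS => /(_ xkS) step.
case: (boolP (minn (height s x) (height s (x + k)) <= v <= maxn (height s x) (height s (x + k))))
  => [between_k | outside_k]; first by apply: IH => //; lia.
by exists (x + k.+1) => //; move: step; case: nth => step; lia.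
Qed.

Lemma height_between s x y v : x <= size s -> y <= size s ->
  minn (height s x) (height s y) <= v <= maxn (height s x) (height s y) ->
  exists2 t, t <= size s & height s t = v.
Proof.
move=> xS yS; case: (leqP x y) => [xy | /ltnW yx].
  by have := @height_ivt s x (y - x) v; rewrite subnKC //; apply.
by rewrite minnC maxnC; have := @height_ivt s y (x - y) v; rewrite subnKC //; apply.
Qed.

Lemma height_two s i : i.+1 < size s ->
  (height s i == height s i.+2) = (nth false s i != nth false s i.+1).
Proof.
move=> iS; have := height_step (ltnW iS); have := height_step iS.
by case: (nth false s i) (nth false s i.+1) => [] [] /= step2 step1; apply/eqP; lia.
Qed.

(* Level sets determine a walk up to mirror image: they determine where the walk
   turns, hence every letter relative to the first one. *)
Lemma same_levels_mirror s t : size s = size t ->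
  (forall i j, i <= size s -> j <= size s ->
     (height s i == height s j) = (height t i == height t j)) ->
  s = t \/ s = map negb t.
Proof.
move=> st same_levels.
have same_turns i : i.+1 < size s ->
    (nth false s i == nth false s i.+1) = (nth false t i == nth false t i.+1).
  by move=> iS; apply: negb_inj; rewrite -height_two // -height_two -?st // same_levels //; lia.
have agree i : i < size s -> (nth false s i == nth false t i) = (nth false s 0 == nth false t 0).
  elim: i => [//|i IH] iS; rewrite -IH; last lia.
  by have := same_turns i iS; do 4 case: nth.
case: (boolP (nth false s 0 == nth false t 0)) => s0t0.
  by left; apply: (eq_from_nth (x0 := false)) => // i iS; apply/eqP; rewrite agree.
right; apply: (eq_from_nth (x0 := false)); rewrite ?size_map // => i iS.
rewrite (nth_map false) -?st //.
by have := agree i iS; rewrite (negbTE s0t0); do 2 case: nth.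
Qed.

Definition rises S s :=
  exists i j, [/\ i <= j, j <= size s & S + height s i <= height s j].
Definition falls S s :=
  exists i j, [/\ i <= j, j <= size s & S + height s j <= height s i].
Definition spans S s :=
  exists i j, [/\ i <= size s, j <= size s & S + height s i <= height s j].

Lemma falls_mirror S s : falls S s <-> rises S (map negb s).
Proof.
split=> -[i [j [ij js H]]]; exists i, j; rewrite size_map in js *;
  by split => //; have := height_mirror s i; have := height_mirror s j; lia.
Qed.

Lemma spans_rises_falls S s : spans S s <-> rises S s \/ falls S s.
Proof.
split=> [[i [j [iS jS H]]] | [] [i [j [ij js H]]]].
- case: (leqP i j) => [ij | /ltnW ji]; first by left; exists i, j.
  by right; exists j, i.
- by exists i, j; split => //; lia.
- by exists j, i; split => //; lia.
Qed.

(* A walk shorter than 2S cannot both rise and fall by S: the two excursions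
   would need more than size s steps in total. *)
Lemma rises_falls_excl S s : size s < 2 * S -> rises S s -> falls S s -> False.
Proof.
move=> sS [i [j [ij js rise]]] [k [l [kl ls fall]]].
have := height_dist s j i; have := height_dist s k l.
have := height_dist s j l; have := height_dist s k i.
lia.
Qed.

(* reach S c s: starting with excess c over its running minimum, the walk s
   reaches excess S (a down-step at excess 0 lowers the minimum instead). *)
Fixpoint reach S c s : bool :=
  (S <= c) || (if s is b :: s' then reach S (if b then c.+1 else c.-1) s' else false).

Lemma reach_iff S c s : reach S c s <->
  exists i j, [/\ i <= j, j <= size s & S + height s i <= height s j + (i == 0) * c].
Proof.
elim: s c => [|b s IH] c /=.
  rewrite orbF; split => [Sc | [[|i] [[|j] [//= _ _]]]]; last by rewrite height0 /=; lia.
  by exists 0, 0; rewrite height0 /=; split => //; lia.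
split.
  case/orP => [Sc | /IH [[|i] [j [ij js H]]]].
  - by exists 0, 0; split => //; lia.
  - (* the rise starts at the beginning of s, except after a down-step from the minimum *)
    rewrite height0 in H; case: b c H => [|] [|c] /= H.
    + by exists 0, j.+1; rewrite height0 height_cons /=; split => //; lia.
    + by exists 0, j.+1; rewrite height0 height_cons /=; split => //; lia.
    + by exists 1, j.+1; rewrite !height_cons height0 /=; split => //; lia.
    + by exists 0, j.+1; rewrite height0 height_cons /=; split => //; lia.
  - by exists i.+2, j.+1; rewrite !height_cons; split => //; lia.
case=> i [j [ij js H]]; case: (leqP S c) => [// | Sc] /=; apply/IH.
case: j ij js H => [|j] ij js H.
  by move: H; rewrite (_ : i = 0) ?height0 /=; lia.
case: i ij H => [|i] ij H.
  rewrite height0 height_cons /= in H.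
  exists 0, j; rewrite height0; split => //.
  by case: b c Sc H => [|] [|c] /=; lia.
by exists i, j; rewrite !height_cons in H; split => //; lia.
Qed.

Lemma reach_rises S s : reach S 0 s <-> rises S s.
Proof. by rewrite reach_iff; split=> -[i [j [ij js H]]]; exists i, j; split => //; lia. Qed.

Definition max_rise_is S s := reach S 0 s && ~~ reach S.+1 0 s.

Lemma max_rise_rises S s : max_rise_is S s <-> rises S s /\ ~ rises S.+1 s.
Proof. by rewrite /max_rise_is -!reach_rises; split => [/andP [-> /negP] | [-> /negP]]. Qed.

End Walks.

(* above L m counts the words of length L (with i down-steps) whose walk ends at
   least m above its start; above2 L m is the count that, by the reflection
   principle, controls the excess of the walk over its running minimum. *)
Definition above L m := \sum_(i < L.+1) (m + 2 * i <= L) * 'C(L, i).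
Definition above2 L m := above L m + above L m.+1.

Lemma above_rec L m : above L.+1 m.+1 = above L m + above L m.+2.
Proof.
have shift i : (m.+1 + 2 * i.+1 <= L.+1) = (m.+2 + 2 * i <= L) by apply/idP/idP; lia.
rewrite /above big_ord_recl /= bin0 muln1.
under eq_bigr => i _ do rewrite /bump /= binS mulnDr shift.
rewrite big_split /= addnA; congr (_ + _).
rewrite [in RHS]big_ord_recl /= bin0 muln1 !muln0 !addn0.
congr (_ + _); rewrite big_ord_recr /= bin_small // muln0 addn0.
by apply: eq_bigr => i _; rewrite /bump /= (_ : m + 2 * i.+1 = m.+2 + 2 * i) //; lia.
Qed.

Lemma above_big L m : L < m -> above L m = 0.
Proof.
by move=> Lm; rewrite /above big1 // => i _; rewrite leqNgt (_ : L < _) ?mul0n //; lia.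
Qed.

Lemma above_diff L m : m <= L -> above L m = above L m.+2 + 'C(L, (L - m)./2).
Proof.
move=> mL; have half_le : (L - m)./2 < L.+1.
  by rewrite ltnS -divn2 (leq_trans (leq_div _ _)) ?leq_subr.
have := odd_double_half (L - m); rewrite -muln2.
set h := (L - m)./2 => odd_half.
have odd_cases : L - m = 2 * h \/ L - m = (2 * h).+1 by case: odd odd_half; lia.
rewrite /above (bigD1 (Ordinal half_le)) //= [in RHS](bigD1 (Ordinal half_le)) //=.
have -> : m + 2 * h <= L by lia.
have -> : (m.+2 + 2 * h <= L) = false by apply/negbTE; rewrite -ltnNge; lia.
rewrite mul1n mul0n addnAC; congr (_ + _).
apply: eq_bigr => i; rewrite -val_eqE /= => /eqP i_half.
by rewrite (_ : m + 2 * i <= L = (m.+2 + 2 * i <= L)) //; apply/idP/idP; lia.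
Qed.

(* The corresponding facts for above2, the recursion being stated with explicit
   neighbouring arguments a = m - 1 and b = m + 1. *)
Lemma above2_rec L m a b : a.+1 = m -> b = m.+1 ->
  above2 L.+1 m = above2 L a + above2 L b.
Proof. by move=> <- ->; rewrite /above2 !above_rec; lia. Qed.

Lemma above2_big L m : L < m -> above2 L m = 0.
Proof. by move=> Lm; rewrite /above2 !above_big //; lia. Qed.

Lemma above2_nil m : above2 0 m = (m == 0).
Proof. by rewrite /above2 /above !big_ord_recl !big_ord0 /=; case: m. Qed.

(* Every word ends either at least 0 or at least 1 below its start, not both. *)
Lemma above2_zero L : above2 L 0 = 2 ^ L.
Proof.
have -> : 2 ^ L = \sum_(i < L.+1) 'C(L, i).
  by rewrite -[2]/(1 + 1) expnDn; apply: eq_bigr => i _; rewrite !exp1n !muln1.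
rewrite /above2 /above [X in _ + X](reindex_inj rev_ord_inj) -big_split.
apply: eq_bigr => i _; have iL : i <= L by rewrite -ltnS.
rewrite /= subSS bin_sub // -mulnDl.
by rewrite (_ : (0 + 2 * i <= L) + (1 + 2 * (L - i) <= L) = 1) ?mul1n //; do 2 case: leqP; lia.
Qed.

Lemma above2_diff L m : m <= L ->
  above2 L m - above2 L m.+2 = 'C(L, (L - m)./2) + (m < L) * 'C(L, (L - m).-1./2).
Proof.
move=> mL; rewrite /above2 (above_diff mL).
case: ltnP => [mL' | Lm]; last by rewrite !above_big ?mul0n; lia.
by rewrite (above_diff mL') (_ : L - m.+1 = (L - m).-1); lia.
Qed.

Lemma count_reach_cons S c L :
  count (reach S c) (all_words L.+1) =
  if S <= c then 2 ^ L.+1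
  else count (reach S c.+1) (all_words L) + count (reach S c.-1) (all_words L).
Proof.
rewrite /= count_cat !count_map; case: leqP => Sc.
  rewrite !(eq_count (a2 := predT)) => [|s|s]; rewrite /= ?Sc //.
  by rewrite !count_predT size_all_words expnS; lia.
by congr (_ + _); apply: eq_count => s; rewrite /= leqNgt Sc.
Qed.

(* Reflection principle: the two terms account for the excess reaching S
   directly and after the running minimum has moved. *)
Lemma count_reach S c L : c <= S -> L <= 2 * S ->
  count (reach S c) (all_words L) = above2 L (S - c) + above2 L (S + c + 1).
Proof.
elim: L c => [|L IH] c cS LS.
  rewrite /= !above2_nil; case: leqP => Sc /=; rewrite (_ : S + c + 1 == 0 = false) //; lia.
rewrite count_reach_cons; case: leqP => Sc.
  by rewrite (_ : S - c = 0) ?above2_zero ?above2_big //; lia.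
case: c cS Sc => [|c] cS Sc /=; rewrite !IH; try lia.
  rewrite (@above2_rec L (S - 0) (S - 1) (S + 0 + 1)); try lia.
  by rewrite (@above2_rec L (S + 0 + 1) (S - 0) (S + 1 + 1)); lia.
rewrite (@above2_rec L (S - c.+1) (S - c.+2) (S - c)); try lia.
by rewrite (@above2_rec L (S + c.+1 + 1) (S + c + 1) (S + c.+2 + 1)); lia.
Qed.

Lemma count_max_rise S L : L <= 2 * S ->
  count (max_rise_is S) (all_words L) = above2 L S - above2 L S.+2.
Proof.
move=> LS; have reach_mono s : reach S.+1 0 s -> reach S 0 s.
  by move=> /reach_rises [i [j [? ? ?]]]; apply/reach_rises; exists i, j; split => //; lia.
rewrite /max_rise_is count_predD // !count_reach //; last lia.
by rewrite !subn0 !addn0 !addn1; lia.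
Qed.

Section FibrePartition.
Variable T : finType.

Lemma preim_partition_eq (rT rT' : eqType) (f : T -> rT) (g : T -> rT') :
  (forall x y, (f x == f y) = (g x == g y)) ->
  preim_partition f [set: T] = preim_partition g [set: T].
Proof.
move=> same_ker; apply: eq_imset => x.
by apply/setP => y; rewrite !inE same_ker.
Qed.

Lemma pblock_preim_partition (rT : eqType) (f : T -> rT) x y :
  (y \in pblock (preim_partition f [set: T]) x) = (f x == f y).
Proof.
apply: (pblock_equivalence_partition (R := fun x y => f x == f y)) => //.
by move=> a b c _ _ _ /=; split => // /eqP ->.
Qed.

Lemma preim_partition_ker (rT rT' : eqType) (f : T -> rT) (g : T -> rT') :
  preim_partition f [set: T] = preim_partition g [set: T] ->
  forall x y, (f x == f y) = (g x == g y).
Proof. by move=> same x y; rewrite -!pblock_preim_partition same. Qed.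

Lemma card_preim_partition (rT : finType) (f : T -> rT) :
  #|preim_partition f [set: T]| = #|f @: [set: T]|.
Proof.
have -> : preim_partition f [set: T] = [set [set y | f y == v] | v in f @: [set: T]].
  rewrite /preim_partition /equivalence_partition -imset_comp.
  by apply: eq_imset => x; apply/setP => y; rewrite !inE eq_sym.
apply: card_in_imset => _ _ /imsetP [x _ ->] /imsetP [x' _ ->] /setP same.
by have := same x; rewrite !inE eqxx => /esym /eqP.
Qed.

End FibrePartition.

Lemma card_ord_le L K : K <= L -> #|[set v : 'I_L.+1 | val v <= K]| = K.+1.
Proof.
move=> KL; have KL1 : K.+1 <= L.+1 by [].
have -> : [set v : 'I_L.+1 | val v <= K] = [set widen_ord KL1 j | j : 'I_K.+1].
  apply/setP => v; rewrite !inE; apply/idP/imsetP => [vK | [j _ ->]].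
    by exists (Ordinal (vK : (v : nat) < K.+1)) => //; apply: val_inj.
  by rewrite /= -ltnS.
by rewrite card_imset ?card_ord // => x y /(congr1 val) /= /val_inj.
Qed.

Section WalkMap.
Variable L : nat.
Implicit Types (s : seq bool) (S : nat) (i j : 'I_L.+1) (f : {ffun 'I_L.+1 -> 'I_L.+1}).

Definition lowest s : 'I_L.+1 := [arg min_(i < ord0) height s i].
Definition highest s : 'I_L.+1 := [arg max_(i > ord0) height s i].

Lemma lowestP s i : height s (lowest s) <= height s i.
Proof. by rewrite /lowest; case: arg_minnP => // j _; apply. Qed.

Lemma highestP s i : height s i <= height s (highest s).
Proof. by rewrite /highest; case: arg_maxnP => // j _; apply. Qed.

Lemma height_range s i j : size s = L -> height s i <= height s j + L.
Proof. by move=> sL; have := height_dist s i j; have := ltn_ord i; have := ltn_ord j; lia. Qed.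

Definition walk_map s : {ffun 'I_L.+1 -> 'I_L.+1} :=
  [ffun i : 'I_L.+1 => inord (height s i - height s (lowest s))].

Lemma walk_map_val s i : size s = L ->
  val (walk_map s i) = height s i - height s (lowest s).
Proof. by move=> sL; rewrite ffunE /= inordK //; have := height_range i (lowest s) sL; lia. Qed.

Lemma walk_map_eq s i j : size s = L ->
  (walk_map s i == walk_map s j) = (height s i == height s j).
Proof.
move=> sL; rewrite -val_eqE /= !walk_map_val //.
by have := lowestP s i; have := lowestP s j; move=> *; apply/eqP/eqP; lia.
Qed.

Lemma walk_map_endo s : size s = L -> is_path_endo (walk_map s).
Proof.
move=> sL; apply/forallP => i; apply/forallP => j; apply/implyP => /eqP ji.
have {}ji : nat_of_ord j = (nat_of_ord i).+1 by [].
have iS : (i : nat) < size s by have := ltn_ord j; lia.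
rewrite /path_adj !walk_map_val //; have := height_step iS; rewrite -ji.
have := lowestP s i; have := lowestP s j.
by case: (nth false s i) => /= *; apply/orP; [right | left]; apply/eqP; lia.
Qed.

Definition walk_partition s := preim_partition (walk_map s) [set: 'I_L.+1].

Lemma card_walk_partition s : size s = L ->
  #|walk_partition s| = (height s (highest s) - height s (lowest s)).+1.
Proof.
move=> sL; rewrite card_preim_partition.
have span_le : height s (highest s) - height s (lowest s) <= L.
  by have := height_range (highest s) (lowest s) sL; lia.
rewrite -(card_ord_le span_le); apply: eq_card => v; rewrite [in RHS]inE.
apply/imsetP/idP => [[i _ ->] | v_le].
  by rewrite walk_map_val //; have := highestP s i; lia.
have [t tS ht] : exists2 t, t <= size s & height s t = v + height s (lowest s).
  apply: (@height_between s (lowest s) (highest s)); try by rewrite sL -ltnS.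
  by have := lowestP s (highest s); move: v_le => /= ?; lia.
have tL : t < L.+1 by lia.
by exists (Ordinal tL) => //; apply: val_inj; rewrite walk_map_val //= ht; lia.
Qed.

Lemma spans_extremes s S : size s = L ->
  spans S s <-> S + height s (lowest s) <= height s (highest s).
Proof.
move=> sL; split => [[i [j [iS jS H]]] | H].
  by have := lowestP s (inord i); have := highestP s (inord j); rewrite !inordK; lia.
by exists (lowest s), (highest s); split => //; rewrite sL -ltnS.
Qed.

Lemma card_walk_partition_spans s S : size s = L ->
  #|walk_partition s| = S.+1 <-> spans S s /\ ~ spans S.+1 s.
Proof.
move=> sL; rewrite card_walk_partition // !spans_extremes //.
have := lowestP s (highest s); split => [? | [? ?]]; lia.
Qed.

Lemma walk_partition_mirror s : size s = L -> walk_partition (map negb s) = walk_partition s.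
Proof.
move=> sL; apply: preim_partition_eq => x y; rewrite !walk_map_eq ?size_map //.
have := height_mirror s x; have := height_mirror s y.
by move=> *; apply/eqP/eqP; lia.
Qed.

Lemma max_rise_card S s : size s = L -> L < 2 * S -> max_rise_is S s ->
  #|walk_partition s| = S.+1.
Proof.
move=> sL LS /max_rise_rises [rise no_rise]; apply/card_walk_partition_spans => //.
split; first by apply/spans_rises_falls; left.
case/spans_rises_falls => // [[i [j [ij js fall]]]].
by apply: (@rises_falls_excl S s) => //; [lia | exists i, j; split => //; lia].
Qed.

Lemma card_max_rise S s : size s = L -> L < 2 * S -> #|walk_partition s| = S.+1 ->
  max_rise_is S s \/ max_rise_is S (map negb s).
Proof.
move=> sL LS /card_walk_partition_spans [|spanS no_spanS] //.
case/spans_rises_falls: spanS => [rise | /falls_mirror rise_mirror].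
  left; apply/max_rise_rises; split => // riseS.
  by apply: no_spanS; apply/spans_rises_falls; left.
right; apply/max_rise_rises; split => // /falls_mirror fallS.
by apply: no_spanS; apply/spans_rises_falls; right.
Qed.

(* Distinct words of maximal rise S give distinct partitions: the mirror image of
   such a word falls by S. *)
Lemma walk_partition_inj S : L < 2 * S ->
  {in [set t : L.-tuple bool | max_rise_is S t] &,
     injective (fun t : L.-tuple bool => walk_partition t)}.
Proof.
move=> LS t1 t2; rewrite !inE => /max_rise_rises [rise1 _] /max_rise_rises [rise2 _] same.
have same_levels (i j : nat) : i <= size t1 -> j <= size t1 ->
    (height t1 i == height t1 j) = (height t2 i == height t2 j).
  rewrite size_tuple => iL jL; have := preim_partition_ker same (inord i) (inord j).
  by rewrite !walk_map_eq ?size_tuple // !inordK.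
case: (same_levels_mirror (etrans (size_tuple t1) (esym (size_tuple t2))) same_levels).
  by move/val_inj.
move=> t1_mirror; rewrite t1_mirror in rise1.
by case: (@rises_falls_excl S t2); rewrite ?size_tuple //; apply/falls_mirror.
Qed.

Definition steps f : seq bool :=
  mkseq (fun i : nat => (f (inord i) : nat) < f (inord i.+1)) L.

Lemma size_steps f : size (steps f) = L.
Proof. exact: size_mkseq. Qed.

Lemma endo_height f : is_path_endo f -> forall i : nat, i <= L ->
  (f (inord i) : nat) + L = f (inord 0) + height (steps f) i.
Proof.
move=> /forallP endo; elim=> [|i IH] iL; first by rewrite height0 size_steps.
have iS : i < size (steps f) by rewrite size_steps.
have step := height_step iS; rewrite nth_mkseq in step; last by rewrite -(size_steps f).
have adj : path_adj (f (inord i)) (f (inord i.+1)).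
  by apply: (implyP (forallP (endo (inord i)) (inord i.+1))); rewrite /= !inordK; lia.
move: step adj (IH (ltnW iL)); rewrite /path_adj.
by case: ltnP => /= cmp step /orP [] /eqP; lia.
Qed.

Lemma endo_partition f : is_path_endo f -> induced_partition f = walk_partition (steps f).
Proof.
move=> endo; apply: preim_partition_eq => x y; rewrite walk_map_eq ?size_steps //.
have := endo_height endo (ltn_ord x); have := endo_height endo (ltn_ord y).
by rewrite !inord_val -val_eqE /= => *; apply/eqP/eqP; lia.
Qed.

End WalkMap.

Lemma count_partitions S L : L < 2 * S ->
  #|[set rho in CP L.+1 | #|rho| == S.+1]| = count (max_rise_is S) (all_words L).
Proof.
move=> LS; rewrite -card_tuple_count -(card_in_imset (walk_partition_inj LS)).
apply: eq_card => rho; rewrite [in LHS]inE; apply/andP/imsetP.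
  case=> /imsetP [f]; rewrite inE => endo -> /eqP card_rho.
  have steps_word : size (steps f) == L by rewrite size_steps.
  rewrite endo_partition // in card_rho *.
  case: (card_max_rise (size_steps f) LS card_rho) => max_rise.
    by exists (Tuple steps_word); rewrite ?inE.
  have mirror_word : size (map negb (steps f)) == L by rewrite size_map size_steps.
  exists (Tuple mirror_word); rewrite ?inE //=.
  by rewrite walk_partition_mirror // size_steps.
case=> t; rewrite inE => max_rise ->; split.
  by apply/imsetP; exists (walk_map L t); rewrite ?inE ?walk_map_endo ?size_tuple.
by rewrite (max_rise_card (size_tuple t) LS max_rise).
Qed.

Lemma binomz_pred a m : binomz a (m%:Z - 1)%R = (0 < m) * 'C(a, m.-1).
Proof. by case: m => [|m] //; rewrite -predn_int // mul1n. Qed.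

Unset Implicit Arguments.

Theorem theorem3 (k n : nat) (hk : (1 <= k)%N) (hn : (2 * k <= n)%N) :
  l_k k n = (binomz n.-1 ((uphalf k)%:Z - 1)%R + binomz n.-1 ((k./2)%:Z - 1)%R)%N.
Proof.
case: n hn => [|L] hn; first lia.
have LS : L < 2 * (L.+1 - k) by lia.
rewrite /l_k addn1 count_partitions // count_max_rise; last lia.
rewrite above2_diff; last lia.
rewrite !binomz_pred /= (_ : L - (L.+1 - k) = k.-1); last lia.
case: k hk hn LS => [|[|k]] //= _ hn LS.
  by rewrite subSS subn0 ltnn !mul0n mul1n.
by rewrite (_ : L.+1 - k.+2 < L) ?mul1n //; lia.
Qed.
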